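(* Let $(X,d,\mu)$ be a metric median algebra and let $M\subseteq N$ be finite median subalgebras of $(X,\mu)$. Then $d^M_\mu(x,y)\le d^N_\mu(x,y)$ for all $x,y\in X$.
   Context: A median algebra is a set with a ternary operation $\mu$ such that $\mu(x,y,z)=\mu(x,z,y)=\mu(y,z,x)$, $\mu(x,x,y)=x$ and $\mu(\mu(x,y,z),u,v)=\mu(x,\mu(y,u,v),\mu(z,u,v))$. The median interval is $I(x,y)=\{z:\mu(x,y,z)=z\}$; a subset is convex if it contains $I(a,b)$ for all its elements $a,b$; a subalgebra is a subset closed under $\mu$. A wall of a median algebra $M$ is a partition $M=h\sqcup h^c$ into two non-empty convex subsets; it separates $a,b$ if they lie in different parts; $\mathcal{W}(M)$ is the set of walls and $\mathcal{W}^M(a|b)$ the set of walls separating $a,b$. For a finite median algebra $M$, an edge is a pair $\{x,y\}\subseteq M$ separated by exactly one wall of $M$. A metric median algebra $(X,d,\mu)$ is a median algebra with a metric $d$ for which $\mu$ is continuous. For a finite subalgebra $M\subseteq X$ and $W\in\mathcal{W}(M)$, let $\lambda^M_{\max}(W)=\max d(a,b)$ over edges $\{a,b\}$ of $M$ separated by $W$; for $x,y\in X$ set $d^M_\mu(x,y)=\sum_{W\in\mathcal{W}^M(x|y)}\lambda^M_{\max}(W)$ if $x,y\in M$, and $d^M_\mu(x,y)=0$ otherwise. *)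

From HB Require Import structures.
From mathcomp Require Import all_boot all_order all_algebra.
From mathcomp Require Import finmap.
From mathcomp Require Import reals.
Set Implicit Arguments. Unset Strict Implicit. Unset Printing Implicit Defensive.
Import Order.TTheory GRing.Theory Num.Theory.
Local Open Scope fset_scope.
Local Open Scope ring_scope.

Section MedianDefs.
Variables (R : realType) (X : choiceType).

Definition median_algebra (mu : X -> X -> X -> X) : Prop :=
  [/\ (forall x y z, mu x y z = mu x z y),
      (forall x y z, mu x y z = mu y z x),
      (forall x y, mu x x y = x) &
      (forall x y z u v, mu (mu x y z) u v = mu x (mu y u v) (mu z u v))].

Definition is_metric (d : X -> X -> R) : Prop :=
  [/\ (forall x y, d x y = 0 <-> x = y),
      (forall x y, d x y = d y x) &
      (forall x y z, d x z <= d x y + d y z)].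

Definition mu_continuous (d : X -> X -> R) (mu : X -> X -> X -> X) : Prop :=
  forall x y z (e : R), 0 < e -> exists2 delta : R, 0 < delta &
    forall x' y' z', d x x' < delta -> d y y' < delta -> d z z' < delta ->
      d (mu x y z) (mu x' y' z') < e.

Definition metric_median_algebra (d : X -> X -> R) (mu : X -> X -> X -> X) :=
  [/\ median_algebra mu, is_metric d & mu_continuous d mu].

Variable mu : X -> X -> X -> X.

Definition subalgebra (M : {fset X}) : Prop :=
  forall a b c, a \in M -> b \in M -> c \in M -> mu a b c \in M.

(* Convexity of h inside the (sub)algebra M: h contains I(a,b) ∩ M. *)
Definition convex_in (M h : {fset X}) : bool :=
  [forall a : h, forall b : h, forall z : M,
     (mu (val a) (val b) (val z) == val z) ==> (val z \in h)].

Definition halfspace (M h : {fset X}) : bool :=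
  [&& h `<=` M, h != fset0, M `\` h != fset0, convex_in M h & convex_in M (M `\` h)].

Definition walls (M : {fset X}) : {fset {fset {fset X}}} :=
  [fset [fset h; M `\` h] | h in fpowerset M & halfspace M h].

Definition separates (W : {fset {fset X}}) (a b : X) : bool :=
  [exists h : W, (a \in val h) && (b \notin val h)].

Definition sep_walls (M : {fset X}) (a b : X) : {fset {fset {fset X}}} :=
  [fset W in walls M | separates W a b].

Definition edge (M : {fset X}) (a b : X) : bool :=
  [&& a \in M, b \in M & #|` sep_walls M a b| == 1%N].

Variable d : X -> X -> R.

Definition lambda_max (M : {fset X}) (W : {fset {fset X}}) : R :=
  \big[Num.max/0]_(p <- M `*` M | edge M p.1 p.2 && separates W p.1 p.2) d p.1 p.2.

Definition dM (M : {fset X}) (x y : X) : R :=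
  if (x \in M) && (y \in M) then \sum_(W <- sep_walls M x y) lambda_max M W
  else 0.

End MedianDefs.

From HB Require Import structures.
From mathcomp Require Import all_boot all_order all_algebra.
From mathcomp Require Import finmap.
From mathcomp Require Import reals.
Set Implicit Arguments. Unset Strict Implicit. Unset Printing Implicit Defensive.
Import Order.TTheory GRing.Theory Num.Theory.
Local Open Scope fset_scope.
Local Open Scope ring_scope.

(* Let W be a wall of M separating x and y, and let {a, b} be an edge of M
   realising lambda^M_max(W).  In N, walk from a to b through pairs c, c' with
   c' in [c, b] and [c, c'] = {c, c'}: the points of N whose gate in [c, c'] is c
   form the unique halfspace of N separating c from c', and this wall of N
   separates a from b but not c' from b.  So the walk crosses distinct walls of
   N separating a and b, and the triangle inequality bounds d(a, b) by the sum of
   lambda^N_max over them.  Restricting to M turns each of these walls into a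
   wall of M separating a and b, i.e. into W since {a, b} is an edge of M, and
   they also separate x and y.  Summing over W, each wall of N is counted at
   most once. *)

Section Sums.
Variable R : numDomainType.

Lemma uniq_sub_ler_sum (I : eqType) (s1 s2 : seq I) (F : I -> R) :
  uniq s1 -> uniq s2 -> {subset s1 <= s2} -> (forall i, i \in s2 -> 0 <= F i) ->
  \sum_(i <- s1) F i <= \sum_(i <- s2) F i.
Proof.
move=> u1 u2 s12 F0; rewrite [X in _ <= X](bigID (mem s1)) /=.
have -> : \sum_(i <- s2 | i \in s1) F i = \sum_(i <- s1) F i.
  rewrite -big_filter; apply/perm_big/uniq_perm; rewrite ?filter_uniq // => i.
  by rewrite mem_filter; apply/andP/idP => [[]|i1] //; split=> //; apply: s12.
by rewrite lerDl big_seq_cond sumr_ge0 // => i /andP[/F0].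
Qed.

Lemma ler_sum_fibers (I J : eqType) (s : seq I) (t : seq J) (f : J -> I)
    (F : J -> R) :
  uniq s -> (forall j, j \in t -> 0 <= F j) ->
  \sum_(i <- s) \sum_(j <- t | f j == i) F j <= \sum_(j <- t) F j.
Proof.
move=> us F0; rewrite (exchange_big_dep xpredT) //= big_seq [X in _ <= X]big_seq.
apply: ler_sum => j jt; rewrite big_const_seq.
have -> : count (eq_op (f j)) s = count_mem (f j) s.
  by apply: eq_count => i; rewrite eq_sym.
by rewrite count_uniq_mem //; case: (_ \in _); rewrite /= ?addr0 ?F0.
Qed.

End Sums.

Section Walls.
Variables (X : choiceType) (mu : X -> X -> X -> X).

Lemma convexP (M h : {fset X}) : reflect
  (forall u v z, u \in h -> v \in h -> z \in M -> mu u v z = z -> z \in h)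
  (convex_in mu M h).
Proof.
apply: (iffP idP) => [C u v z hu hv zM e | C].
  have := forallP (forallP (forallP C [` hu]) [` hv]) [` zM].
  by move/implyP; apply; rewrite /= e.
apply/forallP => -[u hu]; apply/forallP => -[v hv]; apply/forallP => -[z zM].
by apply/implyP => /= /eqP; apply: C.
Qed.

Lemma separatesP (W : {fset {fset X}}) a b :
  reflect (exists2 h, h \in W & (a \in h) && (b \notin h)) (separates W a b).
Proof.
apply: (iffP existsP) => [[h H] | [h hW H]]; last by exists [` hW].
by exists (val h) => //; apply: valP.
Qed.

Lemma wallsP (M : {fset X}) W : reflect
  (exists2 h, halfspace mu M h & W = [fset h; M `\` h]) (W \in walls mu M).
Proof.
apply: (iffP idP) => [/imfsetP[h /= /andP[_ hM] ->] | [h hM ->]]; first by exists h.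
apply/imfsetP; exists h => //=; apply/andP; split=> //.
by rewrite fpowersetE; case/and5P: hM.
Qed.

Lemma in_sep_walls M a b W :
  (W \in sep_walls mu M a b) = (W \in walls mu M) && separates W a b.
Proof. by rewrite !inE. Qed.

Lemma halfspaceC (M h : {fset X}) :
  halfspace mu M h -> halfspace mu M (M `\` h).
Proof.
case/and5P => hM h0 hC0 hconv hCconv.
by apply/and5P; split; rewrite ?fsubsetDl ?fsetDK.
Qed.

Lemma wall_halfspace (M : {fset X}) V k : V \in walls mu M -> k \in V ->
  halfspace mu M k /\ V = [fset k; M `\` k].
Proof.
case/wallsP => h hM ->; rewrite in_fset2 => /orP[] /eqP -> //.
split; first exact: halfspaceC.
by case/and5P: hM => hsub _ _ _ _; rewrite fsetDK // fsetUC.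
Qed.

Variables (M N : {fset X}).
Hypothesis MN : M `<=` N.

Definition restrict (W : {fset {fset X}}) : {fset {fset X}} :=
  [fset k `&` M | k in W].

Lemma fsetDI_sub k : (N `\` k) `&` M = M `\` (k `&` M).
Proof.
apply/fsetP => z; rewrite !inE; case zM: (z \in M); last by rewrite !andbF.
by rewrite (fsubsetP MN z zM) !andbT.
Qed.

Lemma restrict_wall k : restrict [fset k; N `\` k] = [fset k `&` M; M `\` (k `&` M)].
Proof. by rewrite /restrict imfset_fset2 fsetDI_sub. Qed.

Lemma halfspace_restrict k : halfspace mu N k ->
  k `&` M != fset0 -> M `\` (k `&` M) != fset0 -> halfspace mu M (k `&` M).
Proof.
case/and5P => _ _ _ /convexP kconv /convexP kCconv kM0 kMC0.
apply/and5P; split; rewrite ?fsubsetIr //.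
  apply/convexP => u v z; rewrite !inE => /andP[uk uM] /andP[vk vM] zM e.
  by rewrite zM andbT; apply: (kconv u v) => //; apply: (fsubsetP MN).
apply/convexP => u v z; rewrite !inE => /andP[uk uM] /andP[vk vM] zM e.
rewrite zM andbT; move: uk vk; rewrite uM vM !andbT => uk vk.
have := kCconv u v z; rewrite !inE !(fsubsetP MN) // !andbT.
by move/(_ uk vk isT e).
Qed.

Lemma restrict_sep_walls V a b : a \in M -> b \in M ->
  V \in sep_walls mu N a b -> restrict V \in sep_walls mu M a b.
Proof.
move=> aM bM; rewrite in_sep_walls => /andP[VN /separatesP[k kV /andP[ak bk]]].
have [kN EV] := wall_halfspace VN kV.
have abk : (a \in k `&` M) && (b \notin k `&` M) by rewrite !inE ak aM (negbTE bk).
rewrite in_sep_walls EV restrict_wall; apply/andP; split.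
  apply/wallsP; exists (k `&` M) => //; apply: halfspace_restrict => //.
    by apply/fset0Pn; exists a; case/andP: abk.
  by apply/fset0Pn; exists b; rewrite inE bM andbT; case/andP: abk.
by apply/separatesP; exists (k `&` M); rewrite ?in_fset2 ?eqxx.
Qed.

Lemma separates_restrict W x y : y \in M ->
  separates (restrict W) x y -> separates W x y.
Proof.
move=> yM /separatesP[_ /imfsetP[k /= kW ->]].
rewrite !inE yM andbT => /andP[/andP[xk _] yk].
by apply/separatesP; exists k => //; rewrite xk yk.
Qed.

End Walls.

Section MedianAlgebra.
Variables (X : choiceType) (mu : X -> X -> X -> X).
Hypothesis mu_median : median_algebra mu.

Lemma mu_perm23 x y z : mu x y z = mu x z y. Proof. by case: mu_median. Qed.
Lemma mu_rot x y z : mu x y z = mu y z x. Proof. by case: mu_median. Qed.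
Lemma mu_xxy x y : mu x x y = x. Proof. by case: mu_median. Qed.
Lemma mu_distr x y z u v : mu (mu x y z) u v = mu x (mu y u v) (mu z u v).
Proof. by case: mu_median. Qed.

Lemma mu_perm12 x y z : mu x y z = mu y x z.
Proof. by rewrite mu_rot mu_perm23. Qed.

Lemma mu_xyx x y : mu x y x = x. Proof. by rewrite mu_perm23 mu_xxy. Qed.
Lemma mu_yxx x y : mu y x x = x. Proof. by rewrite mu_perm12 mu_xyx. Qed.

Lemma mu_gate x y z : mu (mu x y z) y z = mu x y z.
Proof. by rewrite mu_distr mu_xxy mu_xyx. Qed.

Lemma mu_gate_in_interval a c z : mu a c (mu a c z) = mu a c z.
Proof. by have := mu_gate z a c; rewrite (mu_rot z) (mu_rot (mu a c z)). Qed.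

Lemma mu_interval_trans a b c w : mu a b c = c -> mu a c w = w -> mu a b w = w.
Proof.
move=> cab wac.
have -> : mu a b w = mu (mu w a c) a b by rewrite (mu_rot w) wac (mu_rot w).
by rewrite mu_distr mu_xxy (mu_rot c) cab (mu_rot w).
Qed.

Variable N : {fset X}.
Hypothesis N_sub : subalgebra mu N.

Definition interval_in a c : {fset X} := [fset w in N | mu a c w == w].

Definition adjacent a c : bool := interval_in a c `<=` [fset a; c].

Definition gate_side a c : {fset X} := [fset z in N | mu a c z == a].

Lemma exists_adjacent a b : a \in N -> b \in N -> a != b ->
  exists c, [/\ c \in N, a != c, mu a b c = c & adjacent a c].
Proof.
move=> aN; have [n] := ubnP #|` interval_in a b|.
elim: n b => // n IH b lt_n bN ab.
have [ab_adj | ] := boolP (adjacent a b); first by exists b; rewrite mu_yxx.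
case/fsubsetPn => w; rewrite !inE => /andP[wN /eqP wab] /norP[wa wb].
have [||c [cN ac cw c_adj]] := IH w _ wN; [|by rewrite eq_sym|].
  rewrite -ltnS; apply: leq_trans lt_n; apply: fproper_ltn_card.
  rewrite fproperE; apply/andP; split.
    apply/fsubsetP => z; rewrite !inE => /andP[-> /eqP zaw] /=.
    by apply/eqP; apply: mu_interval_trans wab zaw.
  apply/fsubsetPn; exists b; first by rewrite !inE bN mu_yxx eqxx.
  by rewrite !inE bN /=; apply/eqP => baw; move: wb; rewrite -baw mu_perm23 wab eqxx.
by exists c; split=> //; apply: mu_interval_trans wab cw.
Qed.

Section AdjacentPair.
Variables a c : X.
Hypotheses (aN : a \in N) (cN : c \in N) (ac : a != c) (ac_adj : adjacent a c).

Let h := gate_side a c.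
Let W0 := [fset h; N `\` h].

(* The gate mu a c z lies in [a, c] = {a, c}. *)
Lemma gate_adjacent z : z \in N -> mu a c z = a \/ mu a c z = c.
Proof.
move=> zN; have := fsubsetP ac_adj (mu a c z).
rewrite !inE N_sub //= mu_gate_in_interval eqxx => /(_ isT) /orP[] /eqP; by [left|right].
Qed.

Lemma in_gate_side z : (z \in h) = (z \in N) && (mu a c z == a).
Proof. by rewrite !inE. Qed.

Lemma a_in_gate_side : a \in h. Proof. by rewrite !inE aN mu_xyx eqxx. Qed.
Lemma c_notin_gate_side : c \notin h. Proof. by rewrite !inE cN mu_yxx /= eq_sym. Qed.

Lemma gate_side_halfspace : halfspace mu N h.
Proof.
have gate_neq_a z : z \in N -> (mu a c z != a) = (mu a c z == c).
  by move=> zN; case: (gate_adjacent zN) => ->; rewrite eqxx ?(negbTE ac) // eq_sym.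
have gate_mu u v z : mu u v z = z -> mu a c z = mu u (mu a c v) (mu a c z).
  move=> e; rewrite -{1}e -(mu_rot (mu u v z)) mu_distr.
  by rewrite (mu_rot v) (mu_rot z).
apply/and5P; split.
- by apply/fsubsetP => z; rewrite inE => /andP[].
- by apply/fset0Pn; exists a; apply: a_in_gate_side.
- by apply/fset0Pn; exists c; rewrite inE cN c_notin_gate_side.
- apply/convexP => u v z; rewrite !inE => /andP[uN /eqP ua] /andP[vN /eqP va] zN e.
  rewrite zN /=; case: (gate_adjacent zN) => [-> // | zc].
  move: (gate_mu u v z e); rewrite va zc (mu_rot u) ua => ca.
  by move: ac; rewrite ca eqxx.
apply/convexP => u v z; rewrite !in_fsetD !in_gate_side.
move=> /andP[+ uN] /andP[+ vN] zN; rewrite uN vN zN /= !andbT !gate_neq_a //.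
move=> /eqP uc /eqP vc e.
case: (gate_adjacent zN) => [za | -> //].
move: (gate_mu u v z e); rewrite vc za (mu_perm23 u) (mu_rot u) uc => ac_eq.
by move: ac; rewrite ac_eq eqxx.
Qed.

Lemma gate_side_wall : W0 \in walls mu N.
Proof. by apply/wallsP; exists h => //; apply: gate_side_halfspace. Qed.

Lemma gate_side_separates : separates W0 a c.
Proof.
apply/separatesP; exists h; first by rewrite in_fset2 eqxx.
by rewrite a_in_gate_side c_notin_gate_side.
Qed.

(* A halfspace containing a but not c contains exactly the points whose gate
   in [a, c] is a, by convexity of it and of its complement. *)
Lemma sep_walls_adjacent : sep_walls mu N a c = [fset W0].
Proof.
apply/fsetP => V; rewrite in_sep_walls inE; apply/andP/eqP => [|->]; last first.
  by split; [apply: gate_side_wall | apply: gate_side_separates].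
case=> VN /separatesP[k kV /andP[ak ck]].
have [/and5P[kN _ _ /convexP kconv /convexP kCconv] ->] := wall_halfspace VN kV.
suff -> : k = h by [].
apply/fsetP => z; rewrite in_gate_side; apply/idP/andP => [zk | [zN /eqP za]].
  have zN := fsubsetP kN z zk; split=> //.
  case: (gate_adjacent zN) => [-> // | zc].
  suff : mu a c z \in k by rewrite zc (negbTE ck).
  apply: (kconv a z); rewrite ?N_sub //.
  by have := mu_gate c a z; rewrite (mu_perm12 c) mu_rot.
apply/negPn/negP => zNk; have : mu a c z \in N `\` k.
  apply: (kCconv c z); rewrite ?inE ?ck ?zNk ?N_sub //.
  by have := mu_gate a c z; rewrite mu_rot.
by rewrite za inE ak.
Qed.

Lemma edge_adjacent : edge mu N a c.
Proof. by rewrite /edge aN cN sep_walls_adjacent cardfs1. Qed.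

Variable b : X.
Hypotheses (bN : b \in N) (cab : mu a b c = c).

Lemma b_notin_gate_side : b \notin h.
Proof. by rewrite in_gate_side bN /= -mu_perm23 cab eq_sym. Qed.

Lemma gate_side_notin_sep_walls : W0 \notin sep_walls mu N c b.
Proof.
rewrite in_sep_walls negb_and orbC; apply/orP; left; apply/negP => /separatesP[k].
rewrite in_fset2 => /orP[] /eqP -> /andP[]; first by rewrite (negbTE c_notin_gate_side).
by move=> _; rewrite in_fsetD b_notin_gate_side bN.
Qed.

(* Any halfspace containing c but not b misses a too, because c lies in [a, b]. *)
Lemma sep_walls_step : W0 |` sep_walls mu N c b `<=` sep_walls mu N a b.
Proof.
apply/fsubsetP => V; rewrite !inE => /orP[/eqP -> | ].
  rewrite gate_side_wall /=; apply/separatesP; exists h; first by rewrite in_fset2 eqxx.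
  by rewrite a_in_gate_side b_notin_gate_side.
case/andP => VN /separatesP[k kV /andP[ck bk]]; rewrite VN /=.
apply/separatesP; exists k; rewrite // bk andbT; apply/negPn/negP => ak.
have [/and5P[_ _ _ _ /convexP kCconv] _] := wall_halfspace VN kV.
have : c \in N `\` k by apply: (kCconv a b); rewrite ?inE ?ak ?bk ?aN ?bN.
by rewrite inE ck.
Qed.

End AdjacentPair.

Variables (R : realType) (d : X -> X -> R).
Hypothesis d_metric : is_metric d.

Lemma lambda_max_ge0 M W : 0 <= lambda_max mu d M W.
Proof.
by rewrite /lambda_max; elim/big_rec: _ => // i x _; rewrite le_max orbC => ->.
Qed.

Lemma le_lambda_max M W p q :
  edge mu M p q -> separates W p q -> d p q <= lambda_max mu d M W.
Proof.
move=> e s; apply: (@le_bigmax_seq _ _ _ _ _ (p, q)); last by rewrite /= e s.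
by case/and3P: e => pM qM _; rewrite in_fsetM pM qM.
Qed.

Lemma dist_le_sum_lambda_max a b : a \in N -> b \in N ->
  d a b <= \sum_(W <- sep_walls mu N a b) lambda_max mu d N W.
Proof.
move=> aN bN; have [dxx _ d_tri] := d_metric.
have [n] := ubnP #|` sep_walls mu N a b|; elim: n a aN => // n IH a aN lt_n.
have [-> | ab] := eqVneq a b.
  by rewrite (proj2 (dxx b b)) // sumr_ge0 // => W _; apply: lambda_max_ge0.
have [c [cN ac cab c_adj]] := exists_adjacent aN bN ab.
have step := sep_walls_step aN cN ac c_adj bN cab.
have W0_new := gate_side_notin_sep_walls cN ac bN cab.
apply: le_trans (d_tri a c b) _; apply: le_trans (uniq_sub_ler_sum (fset_uniq _)
  (fset_uniq _) (fsubsetP step) (fun W _ => lambda_max_ge0 N W)).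
rewrite big_fsetU1 //=; apply: lerD.
  by apply: le_lambda_max; [apply: edge_adjacent | apply: gate_side_separates].
apply: IH => //; rewrite -ltnS; apply: leq_trans lt_n.
by have := fsubset_leq_card step; rewrite cardfsU1 W0_new.
Qed.

End MedianAlgebra.

Section Restriction.
Variables (X : choiceType) (mu : X -> X -> X -> X) (M N : {fset X}).
Hypotheses (mu_median : median_algebra mu) (N_sub : subalgebra mu N) (MN : M `<=` N).
Variables (R : realType) (d : X -> X -> R).
Hypothesis d_metric : is_metric d.

Lemma restrict_edge_wall W a b V : edge mu M a b -> W \in sep_walls mu M a b ->
  V \in sep_walls mu N a b -> restrict M V = W.
Proof.
case/and3P => aM bM /cardfs1P[Z sepZ]; rewrite sepZ => /fset1P ->.
by move/(restrict_sep_walls MN aM bM); rewrite sepZ => /fset1P.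
Qed.

Lemma lambda_max_le_sum_restrict W x y : y \in M -> W \in sep_walls mu M x y ->
  lambda_max mu d M W <=
    \sum_(V <- sep_walls mu N x y | restrict M V == W) lambda_max mu d N V.
Proof.
move=> yM; rewrite in_sep_walls => /andP[WM Wxy].
rewrite /lambda_max; elim/big_ind: _ => [||[a b] /= /andP[ab Wab]].
- by rewrite sumr_ge0 // => V _; apply: lambda_max_ge0.
- by move=> u v uS vS; rewrite ge_max uS vS.
have [aM bM _] := and3P ab.
apply: le_trans (dist_le_sum_lambda_max mu_median N_sub d_metric
  (fsubsetP MN a aM) (fsubsetP MN b bM)) _.
rewrite -big_filter; apply: uniq_sub_ler_sum; rewrite ?filter_uniq //.
  move=> V Vab; have WV : restrict M V = W.
    by apply: restrict_edge_wall ab _ Vab; rewrite in_sep_walls WM.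
  move: Vab; rewrite mem_filter WV eqxx !in_sep_walls => /andP[-> _] /=.
  by apply: (separates_restrict yM); rewrite WV.
by move=> V _; apply: lambda_max_ge0.
Qed.

End Restriction.

Theorem lemma3p4 (R : realType) (X : choiceType) (d : X -> X -> R)
  (mu : X -> X -> X -> X) (M N : {fset X}) :
  metric_median_algebra d mu ->
  subalgebra mu M -> subalgebra mu N -> M `<=` N ->
  forall x y : X, dM mu d M x y <= dM mu d N x y.
Proof.
move=> [mu_median d_metric _] _ N_sub MN x y; rewrite /dM.
have [/andP[xM yM] | _] := boolP ((x \in M) && (y \in M)); last first.
  by case: ifP => _ //; rewrite sumr_ge0 // => W _; apply: lambda_max_ge0.
rewrite !(fsubsetP MN) //=; apply: le_trans (ler_sum_fibers (restrict M)
  (fset_uniq _) (fun V _ => lambda_max_ge0 mu d N V)).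
rewrite big_seq [X in _ <= X]big_seq; apply: ler_sum => W.
exact: lambda_max_le_sum_restrict.
Qed.
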